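(* Let $X$ be an infinite compact metrizable space and $h\colon X\to X$ a minimal homeomorphism. If $F\subset X$ is a closed topologically $h$-small set, then $F$ is thin.
   Context: A closed set $F\subset X$ is topologically $h$-small if there is $m\in\mathbb{Z}_{+}$ such that whenever $d(0),\dots,d(m)$ are $m+1$ distinct integers, $h^{d(0)}(F)\cap\cdots\cap h^{d(m)}(F)=\varnothing$. For $F\subset X$ closed and $U\subset X$ open, write $F\prec U$ if there exist $M\in\mathbb{N}$, open sets $U_0,\dots,U_M\subset X$ and integers $d(0),\dots,d(M)$ such that $F\subset\bigcup_{j=0}^M U_j$, $h^{d(j)}(U_j)\subset U$ for all $j$, and the sets $h^{d(j)}(U_j)$, $0\le j\le M$, are pairwise disjoint. A closed set $F$ is thin if $F\prec U$ for every non-empty open $U\subset X$. *)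

From HB Require Import structures.
From mathcomp Require Import all_boot all_order all_algebra.
From mathcomp Require Import all_classical all_reals all_analysis.
Set Implicit Arguments. Unset Strict Implicit. Unset Printing Implicit Defensive.
Import Order.TTheory GRing.Theory Num.Theory.
Local Open Scope classical_set_scope.
Local Open Scope ring_scope.

Definition homeomorphism (X : topologicalType) (h hinv : X -> X) : Prop :=
  [/\ continuous h, continuous hinv, cancel h hinv & cancel hinv h].

Definition hpow (X : Type) (h hinv : X -> X) (d : int) : X -> X :=
  match d with
  | Posz n => iter n h
  | Negz n => iter n.+1 hinv
  end.

Definition minimal_homeo (X : topologicalType) (h : X -> X) : Prop :=
  forall A : set X, closed A -> h @` A = A -> A = set0 \/ A = setT.

Definition top_small (X : topologicalType) (h hinv : X -> X) (F : set X) : Prop :=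
  exists m : nat, forall d : 'I_m.+1 -> int, injective d ->
    \bigcap_(j in [set: 'I_m.+1]) (hpow h hinv (d j) @` F) = set0.

Definition prec (X : topologicalType) (h hinv : X -> X) (F U : set X) : Prop :=
  exists (M : nat) (V : 'I_M.+1 -> set X) (d : 'I_M.+1 -> int),
    [/\ forall j, open (V j),
        F `<=` \bigcup_(j in [set: 'I_M.+1]) V j,
        forall j, hpow h hinv (d j) @` V j `<=` U &
        forall j k, j != k ->
          hpow h hinv (d j) @` V j `&` hpow h hinv (d k) @` V k = set0].

Definition thin (X : topologicalType) (h hinv : X -> X) (F : set X) : Prop :=
  forall U : set X, open U -> U !=set0 -> prec h hinv F U.

From HB Require Import structures.
From mathcomp Require Import all_boot all_order all_algebra finmap.
From mathcomp Require Import all_classical all_reals all_analysis.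
From mathcomp Require Import zify.
Set Implicit Arguments. Unset Strict Implicit. Unset Printing Implicit Defensive.
Import Order.TTheory GRing.Theory Num.Theory.
Local Open Scope classical_set_scope.
Local Open Scope ring_scope.

(* Induction on the smallness index m of F.  Split U into disjoint nonempty
   open sets Y and U'.  By minimality and compactness, finitely many
   translates h^(-d_i)(Y) cover X.  For i <> j the closed set
   F ∩ h^(d_j - d_i)(F) has smaller smallness index, so by induction the
   union G of these sets satisfies G ≺ U', through some open O ⊇ G.  The
   rest F' = F \ O is disjoint from all its translates h^(d_j - d_i)(F'),
   so in a compact Hausdorff space there is an open W ⊇ F' with the same
   property; the images h^(d_i)(W ∩ h^(-d_i)(Y)) are then pairwise disjoint
   subsets of Y, i.e. F' ≺ Y, and F ⊆ F' ∪ O ≺ Y ∪ U' ⊆ U. *)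

Section IntegerPowers.
Variables (X : Type) (h hinv : X -> X).
Hypotheses (hK : cancel h hinv) (hinvK : cancel hinv h).

Lemma hpowD1 d x : hpow h hinv (d + 1) x = h (hpow h hinv d x).
Proof.
case: d => [n|n].
  by have -> : Posz n + 1 = Posz n.+1 by lia.
case: n => [|k]; first by rewrite /= hinvK.
have -> : Negz k.+1 + 1 = Negz k by rewrite !NegzE; lia.
by rewrite /= hinvK.
Qed.

Lemma hpowB1 d x : hpow h hinv (d - 1) x = hinv (hpow h hinv d x).
Proof. by rewrite -{2}(subrK 1 d) hpowD1 hK. Qed.

Lemma hpowD a b x :
  hpow h hinv (a + b) x = hpow h hinv a (hpow h hinv b x).
Proof.
elim/int_rec: a x => [|n IH|n IH] x; first by rewrite add0r.
  have -> : n.+1%:Z + b = (n%:Z + b) + 1 by lia.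
  by rewrite hpowD1 IH -hpowD1; congr hpow; lia.
have -> : - n.+1%:Z + b = (- n%:Z + b) - 1 by lia.
by rewrite hpowB1 IH -hpowB1; congr hpow; lia.
Qed.

Lemma hpowNK a x : hpow h hinv (- a) (hpow h hinv a x) = x.
Proof. by rewrite -hpowD addNr. Qed.

End IntegerPowers.

Lemma continuous_iter (T : topologicalType) (f : T -> T) n :
  continuous f -> continuous (iter n f).
Proof.
move=> fc; elim: n => [|n IH] x /=; first exact: cvg_id.
exact: (@continuous_comp _ _ _ (iter n f) f x (IH x) (fc _)).
Qed.

Lemma continuous_hpow (T : topologicalType) (h hinv : T -> T) d :
  continuous h -> continuous hinv -> continuous (hpow h hinv d).
Proof. by case: d => n hc hic /=; apply: continuous_iter. Qed.

(* [compact_cover] is stated for pointed spaces. *)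
Definition pointed_at (T : topologicalType) (x : T) : Type := T.
HB.instance Definition _ (T : topologicalType) (x : T) :=
  Topological.on (pointed_at x).
HB.instance Definition _ (T : topologicalType) (x : T) :=
  isPointed.Build (pointed_at x) x.

Lemma compact_finite_subcover (T : topologicalType) (K : set T)
    (f : int -> set T) :
  compact K -> (forall n, open (f n)) -> K `<=` \bigcup_n f n ->
  exists (I : finType) (d : I -> int),
    injective d /\ forall x, K x -> exists i, f (d i) x.
Proof.
move=> cK fo Kf.
have [->|/set0P [x0 _]] := eqVneq K set0.
  by exists void, (fun v : void => match v with end); split => [[]|].
have : @cover_compact (pointed_at x0) K by rewrite -compact_cover.
case/(_ int setT f (fun n _ => fo n)) => [x /Kf [n _ fx]|D _ KD].
  by exists n.
exists D, val; split => [|x /KD [n /= Dn fnx]]; first exact: val_inj.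
by exists (FSetSub Dn).
Qed.

Lemma closed_disjoint_separated (T : topologicalType) (A B : set T) :
  hausdorff_space T -> compact [set: T] -> closed A -> closed B ->
  A `&` B = set0 ->
  exists U V : set T,
    [/\ open U, open V, A `<=` U, B `<=` V & U `&` V = set0].
Proof.
move=> hsT cT cA cB AB0.
have : filter_from (set_nbhs A) closure (~` B).
  apply: (compact_normal hsT cT cA).
  apply/set_nbhsP; exists (~` B); split => //; first by rewrite -closedC setCK.
  by move=> x Ax Bx; have : (A `&` B) x by []; rewrite AB0.
case=> C /set_nbhsP [U [oU AU UC]] clCB.
exists U, (~` closure C); split => //.
- by rewrite -closedC setCK; exact: closed_closure.
- by move=> x Bx clx; exact: (clCB x clx).
- rewrite -subset0 => x [Ux]; apply; apply: subset_closure; exact: UC.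
Qed.

(* [fprec F U] is [F ≺ U] with the translated open sets indexed by an
   arbitrary, possibly empty, finite type. *)
Definition fprec (T : topologicalType) (h hinv : T -> T) (F U : set T) :=
  exists (I : finType) (V : I -> set T) (d : I -> int),
  [/\ forall i, open (V i), F `<=` \bigcup_i V i,
      forall i, hpow h hinv (d i) @` V i `<=` U &
      forall i j, i != j ->
        hpow h hinv (d i) @` V i `&` hpow h hinv (d j) @` V j = set0].

Section FinitePrecedence.
Variables (T : topologicalType) (h hinv : T -> T).

Lemma fprec_sub F F' U U' :
  F' `<=` F -> U `<=` U' -> fprec h hinv F U -> fprec h hinv F' U'.
Proof.
move=> FF UU [I [V [d [oV FV sV dV]]]]; exists I, V, d; split => //.
- by move=> x /FF /FV.
- by move=> i z /sV /UU.
Qed.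

Lemma fprec0 U : fprec h hinv set0 U.
Proof.
by exists void, (fun _ => set0), (fun _ => 0); split => [[]|x []|[]|[]].
Qed.

Lemma fprecU A B U1 U2 : fprec h hinv A U1 -> fprec h hinv B U2 ->
  U1 `&` U2 = set0 -> fprec h hinv (A `|` B) (U1 `|` U2).
Proof.
move=> [I1 [V1 [d1 [oV1 AV1 sV1 dV1]]]] [I2 [V2 [d2 [oV2 BV2 sV2 dV2]]]] U12.
exists (I1 + I2)%type, (fun i => match i with inl i => V1 i | inr i => V2 i end),
  (fun i => match i with inl i => d1 i | inr i => d2 i end); split.
- by case.
- move=> x [/AV1 [i _ Vx]|/BV2 [i _ Vx]]; [exists (inl i) | exists (inr i)] => //.
- by case=> i z Vz; [left; exact: sV1 Vz | right; exact: sV2 Vz].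
- move=> [i|i] [j|j] ij; rewrite -subset0 => z [zi zj].
  + by rewrite -(dV1 i j ij).
  + have : (U1 `&` U2) z by split; [exact: sV1 zi | exact: sV2 zj].
    by rewrite U12.
  + have : (U1 `&` U2) z by split; [exact: sV1 zj | exact: sV2 zi].
    by rewrite U12.
  + by rewrite -(dV2 i j ij).
Qed.

Lemma fprec_open F U :
  fprec h hinv F U -> exists O, [/\ open O, F `<=` O & fprec h hinv O U].
Proof.
move=> [I [V [d [oV FV sV dV]]]]; exists (\bigcup_i V i); split => //.
  by apply: bigcup_open => i _; exact: oV.
by exists I, V, d; split => // x.
Qed.

Lemma prec_of_fprec F U : fprec h hinv F U -> prec h hinv F U.
Proof.
move=> [I [V [d [oV FV sV dV]]]].
pose idx (j : 'I_#|I|.+1) := omap enum_val (unlift ord_max j).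
exists #|I|, (fun j => oapp V set0 (idx j)), (fun j => oapp d 0 (idx j)).
split.
- by move=> j /=; case: (idx j) => [i|] /=; [exact: oV | exact: open0].
- move=> x /FV [i _ Vx]; exists (lift ord_max (enum_rank i)) => //.
  by rewrite /idx liftK /= enum_rankK.
- by move=> j /=; case: (idx j) => [i|] /=; [exact: sV | move=> z [x []]].
- move=> j k jk; rewrite -subset0 => z [] /=; rewrite /idx.
  case: (unliftP ord_max j) => [j' Ej|_] /=; last by case.
  case: (unliftP ord_max k) => [k' Ek|_] /=; last by move=> _ [].
  have jk' : enum_val j' != enum_val k'.
    by apply: contra jk => /eqP/enum_val_inj eq_jk; rewrite Ej Ek eq_jk.
  by move=> zj zk; suff : set0 z by []; rewrite -(dV _ _ jk').
Qed.

End FinitePrecedence.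

Section MinimalHomeomorphism.
Variables (T : topologicalType) (h hinv : T -> T).
Hypotheses (hom : homeomorphism h hinv) (mini : minimal_homeo h).
Hypotheses (hsT : hausdorff_space T) (cT : compact [set: T]).
Hypothesis iT : infinite_set [set: T].

Lemma closed_hpow_image e A : closed A -> closed (hpow h hinv e @` A).
Proof.
have [hc hic _ _] := hom; move=> cA; apply: compact_closed => //.
apply: continuous_compact.
  by apply: continuous_subspaceT; exact: continuous_hpow.
exact: (subclosed_compact cA cT).
Qed.

Lemma orbit_meets_open Y : open Y -> Y !=set0 ->
  forall x, exists n, Y (hpow h hinv n x).
Proof.
have [hc hic hK hiK] := hom; move=> oY [y Yy].
pose A := [set x | forall n, ~ Y (hpow h hinv n x)].
have cA : closed A.
  have -> : A = \bigcap_(n in [set: int]) ~` (hpow h hinv n @^-1` Y).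
    by apply/seteqP; split => [x Ax n _|x Ax n]; apply: Ax.
  apply: closed_bigI => n _; apply: open_closedC; apply: open_comp => //.
  by move=> z _; exact: continuous_hpow.
have hA : h @` A = A.
  apply/seteqP; split.
    move=> _ [x Ax <-] n; have -> : h x = hpow h hinv 1 x by [].
    by rewrite -(hpowD hK hiK); exact: Ax.
  move=> x Ax; exists (hinv x); last by rewrite hiK.
  move=> n; have -> : hinv x = hpow h hinv (-1) x by [].
  by rewrite -(hpowD hK hiK); exact: Ax.
case: (mini cA hA) => [A0|AT] x.
  apply: contrapT => nYx; have : A x by move=> n Yn; apply: nYx; exists n.
  by rewrite A0.
have : A y by rewrite AT.
by move=> /(_ 0).
Qed.

Lemma finite_return_times Y : open Y -> Y !=set0 ->
  exists (I : finType) (d : I -> int),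
    injective d /\ forall x, exists i, Y (hpow h hinv (d i) x).
Proof.
have [hc hic _ _] := hom; move=> oY Y0.
have cover : [set: T] `<=` \bigcup_n hpow h hinv n @^-1` Y.
  by move=> x _; have [n Yn] := orbit_meets_open oY Y0 x; exists n.
have oV n : open (hpow h hinv n @^-1` Y).
  by apply: open_comp => // z _; exact: continuous_hpow.
have [I [d [d_inj dY]]] := compact_finite_subcover cT oV cover.
by exists I, d; split => // x; exact: dY.
Qed.

(* If U were a singleton {u}, finitely many translates of u would exhaust X. *)
Lemma open_not_singleton (U : set T) : open U -> U !=set0 ->
  exists x y, [/\ U x, U y & x != y].
Proof.
have [_ _ hK hiK] := hom; move=> oU [u Uu]; apply: contrapT => U1.
have Uu1 z : U z -> z = u.
  move=> Uz; apply: contrapT => zu; apply: U1; exists z, u; split => //.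
  exact/eqP.
have [I [d [_ dU]]] := finite_return_times oU (ex_intro _ u Uu).
apply: iT; apply: (@sub_finite_set _ _ ((fun i => hpow h hinv (- d i) u) @` setT)).
  move=> x _; have [i Ux] := dU x; exists i => //.
  by rewrite -(Uu1 _ Ux) hpowNK.
by apply: finite_image; exact: finite_finset.
Qed.

Lemma open_split (U : set T) : open U -> U !=set0 ->
  exists U1 U2 : set T, [/\ open U1 /\ U1 !=set0, open U2 /\ U2 !=set0,
     U1 `<=` U, U2 `<=` U & U1 `&` U2 = set0].
Proof.
move=> oU U0; have [x [y [Ux Uy xy]]] := open_not_singleton oU U0.
have := hsT; rewrite open_hausdorff => /(_ x y xy).
case=> [[A B]] /= [xA yB] [oA oB /eqP AB].
exists (U `&` A), (U `&` B); split.
- split; [exact: openI | exists x; split => //; exact: set_mem].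
- split; [exact: openI | exists y; split => //; exact: set_mem].
- by move=> z [].
- by move=> z [].
- rewrite -subset0 => z [[_ Az] [_ Bz]]; have : (A `&` B) z by [].
  by rewrite AB.
Qed.

Lemma fprec_bigcup (I : eqType) (s : seq I) (G : I -> set T) U :
  open U -> U !=set0 ->
  (forall i W, open W -> W !=set0 -> fprec h hinv (G i) W) ->
  fprec h hinv (\bigcup_(i in [set` s]) G i) U.
Proof.
elim: s U => [|i s IH] U oU U0 HG.
  by apply: fprec_sub (fprec0 _ _ U) => // x [j]; rewrite /= in_nil.
have [U1 [U2 [[oU1 U10] [oU2 U20] U1U U2U U12]]] := open_split oU U0.
apply: fprec_sub (fprecU (IH U1 oU1 U10 HG) (HG i U2 oU2 U20) U12).
  move=> x [j /=]; rewrite in_cons => /orP [/eqP -> Gx|js Gx].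
    by right.
  by left; exists j.
by move=> z [/U1U|/U2U].
Qed.

Lemma fprec_of_return_times (F Y : set T) (I : finType) (d : I -> int) :
  closed F -> open Y -> (forall x, exists i, Y (hpow h hinv (d i) x)) ->
  (forall i j, i != j -> F `&` hpow h hinv (d j - d i) @` F = set0) ->
  fprec h hinv F Y.
Proof.
have [hc hic hK hiK] := hom; move=> cF oY dY dF.
have sep (ij : I * I) : exists AB : set T * set T, ij.1 != ij.2 ->
    [/\ open AB.1, open AB.2, F `<=` AB.1,
        hpow h hinv (d ij.2 - d ij.1) @` F `<=` AB.2 & AB.1 `&` AB.2 = set0].
  case: ij => i j; have [ij|_] := boolP (i != j); last by exists (set0, set0).
  have [A [B sepAB]] := closed_disjoint_separated hsT cT cF
    (closed_hpow_image (e := d j - d i) cF) (dF i j ij).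
  by exists (A, B).
have [AB ABP] := choice sep.
pose Q (ij : I * I) := if ij.1 != ij.2 then
  (AB ij).1 `&` hpow h hinv (d ij.2 - d ij.1) @^-1` (AB ij).2 else setT.
pose W := \big[setI/setT]_ij Q ij.
have oW : open W.
  rewrite /W; elim/big_ind: _ => //; [exact: openT | exact: openI |].
  move=> ij _; rewrite /Q; case: ifP => [ij12|_]; last exact: openT.
  have [oA oB _ _ _] := ABP ij ij12.
  by apply: openI => //; apply: open_comp => // z _; exact: continuous_hpow.
have FW : F `<=` W.
  rewrite /W; elim/big_ind: _ => //.
    by move=> A B FA FB x Fx; split; [exact: FA | exact: FB].
  move=> ij _ x Fx; rewrite /Q; case: ifP => [ij12|//].
  have [_ _ FA FB _] := ABP ij ij12; split; first exact: FA.
  by apply: FB; exists x.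
have WQ ij : W `<=` Q ij by rewrite /W (bigD1 ij) //= => x [].
exists I, (fun i => W `&` hpow h hinv (d i) @^-1` Y), d; split.
- move=> i; apply: openI => //.
  by apply: open_comp => // z _; exact: continuous_hpow.
- move=> x Fx; have [i Yx] := dY x; exists i => //; split => //; exact: FW.
- by move=> i z [x [_ Yx] <-].
- move=> i j ij; rewrite -subset0 => z [[x [Wx _] xz] [y [Wy _] yz]].
  have ij12 : (i, j).1 != (i, j).2 by exact: ij.
  have [_ _ _ _ AB0] := ABP _ ij12.
  have := WQ (i, j) x Wx; have := WQ (i, j) y Wy.
  rewrite /Q /= ij => -[_ By] [Ax _].
  have xE : x = hpow h hinv (d j - d i) y.
    by rewrite addrC (hpowD hK hiK) yz -xz (hpowNK hK hiK).
  have : ((AB (i, j)).1 `&` (AB (i, j)).2) x by split => //; rewrite xE.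
  by rewrite AB0.
Qed.

End MinimalHomeomorphism.

Definition small_at (T : Type) (h hinv : T -> T) (m : nat) (F : set T) :=
  forall a : 'I_m.+1 -> int, injective a ->
    \bigcap_(j in [set: 'I_m.+1]) (hpow h hinv (a j) @` F) = set0.

Section Smallness.
Variables (T : Type) (h hinv : T -> T).
Hypotheses (hK : cancel h hinv) (hinvK : cancel hinv h).

Lemma small_at0 F : small_at h hinv 0 F -> F = set0.
Proof.
move=> sF.
have := sF (fun _ => 0) (fun i j _ => etrans (ord1 i) (esym (ord1 j))).
by rewrite -!subset0 => F0 x Fx; apply: (F0 x) => j _; exists x.
Qed.

(* A common point of the sets h^(a_j)(F ∩ h^e(F)) also lies in
   h^(a_j* + e)(F); choosing j* to maximise e * a_j makes a_j* + e a new
   exponent. *)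
Lemma small_atS m F e : e != 0 -> small_at h hinv m.+1 F ->
  small_at h hinv m (F `&` hpow h hinv e @` F).
Proof.
move=> e0 sF a a_inj; rewrite -subset0 => y Hy.
pose js := [arg max_(j > ord0) (e * a j)]%O.
have jsP j : e * a j <= e * a js.
  by rewrite /js; case: Order.TotalTheory.arg_maxP => // i _; apply.
pose a' (j : 'I_m.+2) := if (j < m.+1)%N then a (inord j) else a js + e.
have ee : 0 < e * e by lia.
have a'_inj : injective a'.
  move=> i j; rewrite /a'; case: ifP => il; case: ifP => jl.
  - move/a_inj/(congr1 (@nat_of_ord _)); rewrite !inordK // => ij.
    exact: val_inj.
  - by move=> E; have := jsP (inord i); rewrite E; lia.
  - by move=> E; have := jsP (inord j); rewrite -E; lia.
  - by move=> _; apply: ord_inj; move: (ltn_ord i) (ltn_ord j) il jl; lia.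
have := sF a' a'_inj; rewrite -subset0 => /(_ y); apply => j _; rewrite /a'.
case: ifP => jl.
  by have [g [Fg _] <-] := Hy (inord j) I; exists g.
have [g [_ [f Ff <-]] <-] := Hy js I.
by exists f => //; rewrite hpowD.
Qed.

End Smallness.

Lemma fprec_of_small_at (T : topologicalType) (h hinv : T -> T) m F :
  homeomorphism h hinv -> minimal_homeo h -> hausdorff_space T ->
  compact [set: T] -> infinite_set [set: T] ->
  closed F -> small_at h hinv m F ->
  forall U, open U -> U !=set0 -> fprec h hinv F U.
Proof.
move=> hom mini hsT cT iT; have [_ _ hK hiK] := hom.
elim: m F => [|m IH] F cF sF U oU U0.
  by rewrite (small_at0 sF); exact: fprec0.
have [Y [U' [[oY Y0] [oU' U'0] YU U'U YU']]] := open_split hom mini hsT cT iT oU U0.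
have [I [d [d_inj dY]]] := finite_return_times hom mini cT oY Y0.
pose G (ij : I * I) :=
  if ij.1 != ij.2 then F `&` hpow h hinv (d ij.2 - d ij.1) @` F else set0.
have GU' : fprec h hinv (\bigcup_(ij in [set` enum {: I * I}]) G ij) U'.
  apply: (fprec_bigcup hom mini hsT cT iT) => // ij W oW W0.
  rewrite /G; case: ifP => [ij12|_]; last exact: fprec0.
  apply: IH => //; first by apply: closedI => //; exact: closed_hpow_image.
  apply: small_atS => //.
  by rewrite subr_eq0 (inj_eq d_inj) eq_sym.
have [N [oN GN NU']] := fprec_open GU'.
have F'Y : fprec h hinv (F `&` ~` N) Y.
  apply: (fprec_of_return_times hom hsT cT (d := d)) => //.
    by apply: closedI => //; exact: open_closedC.
  move=> i j ij; rewrite -subset0 => z [[Fz Nz] [x [Fx _] xz]].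
  apply: Nz; apply: GN; exists (i, j); first by rewrite /= mem_enum.
  by rewrite /G ij; split => //; exists x.
apply: fprec_sub (fprecU F'Y NU' YU'); last by move=> z [/YU|/U'U].
by move=> x Fx; have [Nx|nNx] := pselect (N x); [right | left].
Qed.

Theorem proposition3p11 (R : realType) (X : metricType R) (h hinv : X -> X)
  (F : set X) :
  compact [set: X] -> infinite_set [set: X] ->
  homeomorphism h hinv -> minimal_homeo h ->
  closed F -> top_small h hinv F -> thin h hinv F.
Proof.
move=> cT iT hom mini cF [m sF] U oU U0; apply: prec_of_fprec.
exact: (fprec_of_small_at hom mini (@metric_hausdorff R X) cT iT cF sF oU U0).
Qed.
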